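(* Let $p$ be a prime and let $n=n_1n_2$ with $n_1,n_2\ge 1$ integers, and assume $n$ is not prime. Let $\mathbb{F}_{p^n}$ be represented as a tower $\mathbb{F}_{(p^{n_1})^{n_2}}=\mathbb{F}_{p^{n_1}}[x]/(\psi(x))$, where $\psi\in\mathbb{F}_{p^{n_1}}[x]$ is monic irreducible of degree $n_2$, and let $\rho:\mathbb{F}_{p^{n_1}}[x]\to\mathbb{F}_{p^n}$ be reduction modulo $\psi$. Let $d$ be the largest divisor of $n$ with $1<d<n$, and let $\mathbb{F}_{p^d}\subset\mathbb{F}_{p^n}$ be the unique subfield with $p^d$ elements. Let $T\in\mathbb{F}_{p^n}^*$ be an element not lying in any proper subfield of $\mathbb{F}_{p^n}$, represented by a polynomial of degree larger than $n_2-d/n_1$. Then there exist a nonzero $u\in\mathbb{F}_{p^d}$ and a nonzero polynomial $P\in\mathbb{F}_{p^{n_1}}[x]$ of degree at most $n_2-\lceil d/n_1\rceil$ such that $\rho(P)=uT$. Consequently, for every generator $g$ of $\mathbb{F}_{p^n}^*$, $$\log_g\rho(P)\equiv\log_g T \pmod{\Phi_n(p)}.$$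
   Context: $\Phi_n$ denotes the $n$-th cyclotomic polynomial. For a generator $g$ of the cyclic group $\mathbb{F}_{p^n}^*$, $\log_g z$ denotes the discrete logarithm of $z\in\mathbb{F}_{p^n}^*$, an integer defined modulo $p^n-1$; since $\Phi_n(p)$ divides $p^n-1$, congruences of discrete logarithms modulo $\Phi_n(p)$ are well defined. Elements of $\mathbb{F}_{p^n}$ are represented by their unique representative polynomial of degree $<n_2$ in $\mathbb{F}_{p^{n_1}}[x]$. *)

From HB Require Import structures.
From mathcomp Require Import all_boot all_order all_algebra all_field.
Set Implicit Arguments. Unset Strict Implicit. Unset Printing Implicit Defensive.
Import Order.TTheory GRing.Theory Num.Theory.
Local Open Scope ring_scope.

(* The tower field F_{(p^n1)^n2} = K[x]/(psi), K a finite field of order p^n1,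
   psi monic irreducible; we use MathComp's {poly %/ psi with mi} (qfpoly). *)
Notation tower psi mi := (@qfpoly _ psi mi).

Definition rho (K : fieldType) (psi : {poly K}) (mi : monic_irreducible_poly psi)
  (P : {poly K}) : tower psi mi := in_qpoly psi P.

From HB Require Import structures.
From mathcomp Require Import all_boot all_order all_algebra all_field.
From mathcomp Require Import cyclic zify ring.
Set Implicit Arguments. Unset Strict Implicit. Unset Printing Implicit Defensive.
Import Order.TTheory GRing.Theory Num.Theory.
Local Open Scope ring_scope.

(* Proof by pigeonhole.  Write n = n1 n2, q = p ^ d, c = ceil (d / n1) and
   m = n2 - c + 1.  The fixed points of x |-> x ^+ q form a subfield S of
   F = F_{p^n} with exactly q elements.  The q * p ^ (n1 m) pairs (s, v), with
   s in S and v a polynomial over F_{p^n1} of size at most m, outnumber the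
   p ^ n elements of F (because n1 c < d + n1), so s T + rho v takes some
   value twice.  Subtracting the two representations gives u = s1 - s2 in S
   and P = v2 - v1 of degree at most n2 - c with rho P = u T; u != 0 because
   rho is injective on polynomials of degree at most n2, and then P != 0.
   For the logarithms, u ^+ (q - 1) = 1, so (log P - log T)(q - 1) is a
   multiple of p ^ n - 1 = (q - 1) M, where M is divisible by Phi_n(p) because
   Phi_n is one of the factors of ('X^n - 1) / ('X^d - 1). *)

Lemma finField_prim_root (F : finFieldType) :
  exists g : F, (#|F|.-1).-primitive_root g.
Proof.
have F_gt1 := finNzRing_gt1 F.
have := @has_prim_root F (#|F|.-1) (enum [pred x : F | x != 0]).
case/(_ _ _ _ _)/hasP => [||||g _ prim_g]; last by exists g.
- by rewrite -ltnS prednK // ltnW.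
- apply/allP => x; rewrite mem_enum inE => x_neq0.
  rewrite unity_rootE; apply/eqP; apply: (mulIf x_neq0).
  by rewrite -exprSr prednK ?expf_card ?mul1r // ltnW.
- exact: enum_uniq.
- by rewrite -cardE cardC1.
Qed.

Section FixedSubfield.
(* F has p ^ n elements; Fsub is the set of fixed points of the d-th power
   of the Frobenius map, i.e. the subfield F_{p^d} when d divides n. *)
Variables (F : finFieldType) (p n d : nat).
Hypotheses (p_prime : prime p) (cardF : #|F| = (p ^ n)%N).

Definition Fsub : {pred F} := [pred x : F | x ^+ (p ^ d) == x].

(* x |-> x ^+ (p ^ d) is a ring morphism in characteristic p, so its fixed
   points are closed under the field operations. *)
Lemma Fsub_closed : GRing.divring_closed Fsub.
Proof.
have pchar_q : [pchar F].-nat (p ^ d)%N.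
  have pcharF : p \in [pchar F] by exact: card_finPcharP cardF p_prime.
  by rewrite pnatX (eq_pnat _ (pcharf_eq pcharF)) pnat_id ?orbT.
split; first by rewrite inE expr1n.
- move=> u v; rewrite !inE => /eqP fix_u /eqP fix_v.
  by rewrite exprDn_pchar // exprNn_pchar // fix_u fix_v.
- move=> u v; rewrite !inE => /eqP fix_u /eqP fix_v.
  by rewrite exprMn exprVn fix_u fix_v.
Qed.

Lemma Fsub_unity_root u : u \in Fsub -> u != 0 -> u ^+ (p ^ d)%N.-1 = 1.
Proof.
move=> /eqP fix_u u_neq0; apply: (mulIf u_neq0).
by rewrite mul1r -exprSr prednK ?expn_gt0 ?prime_gt0.
Qed.

Hypotheses (d_gt0 : (0 < d)%N) (d_dvd_n : (d %| n)%N).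

Let q_gt1 : (1 < p ^ d)%N.
Proof. by rewrite -(expn0 p) ltn_exp2l ?prime_gt1. Qed.

(* Fsub is contained in the roots of 'X^q - 'X, hence has at most q elements. *)
Lemma card_Fsub_le : (#|Fsub| <= p ^ d)%N.
Proof.
pose P : {poly F} := 'X^(p ^ d) - 'X.
have size_P : size P = (p ^ d).+1.
  by rewrite /P size_polyDl ?size_polyXn // size_polyN size_polyX ltnS.
have P_neq0 : P != 0 by rewrite -size_poly_gt0 size_P.
have := @max_poly_roots F P (enum Fsub) P_neq0.
rewrite enum_uniq size_P cardE ltnS; apply => //.
by apply/allP => x; rewrite mem_enum inE /root /P !hornerE subr_eq0.
Qed.

(* Since p ^ d - 1 divides p ^ n - 1, F contains a primitive
   (p ^ d - 1)-th root of unity, whose powers are q - 1 nonzero elements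
   of Fsub. *)
Lemma card_Fsub_ge : (p ^ d <= #|Fsub|)%N.
Proof.
have k_dvd_N : ((p ^ d).-1 %| #|F|.-1)%N.
  by rewrite cardF -(divnK d_dvd_n) mulnC expnM [X in (_ %| X)%N]predn_exp dvdn_mulr.
have [g prim_g] := finField_prim_root F.
have prim_z := dvdn_prim_root prim_g k_dvd_N.
set z := g ^+ _ in prim_z; set k := (p ^ d).-1 in prim_z.
have k_gt0 : (0 < k)%N by rewrite /k -ltnS prednK // ltnW.
pose zs := [seq z ^+ i | i <- iota 0 k].
have zs_uniq : uniq zs.
  rewrite map_inj_in_uniq ?iota_uniq // => i j.
  rewrite !mem_iota /= => lt_ik lt_jk /eqP.
  by rewrite (eq_prim_root_expr prim_z) !modn_small // => /eqP.
have zs_sub : {subset zs <= enum [predD1 Fsub & 0]}.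
  have z_neq0 : z != 0.
    apply: contra_eq_neq (prim_expr_order prim_z) => ->.
    by rewrite expr0n eqn0Ngt k_gt0 eq_sym oner_neq0.
  move=> _ /mapP [i _ ->]; rewrite mem_enum !inE expf_neq0 //=.
  rewrite -exprM mulnC exprM -[(p ^ d)%N](prednK (ltnW q_gt1)) exprS.
  by rewrite (prim_expr_order prim_z) mulr1.
have Fsub0 : 0 \in Fsub by rewrite inE expr0n eqn0Ngt (ltnW q_gt1).
have := uniq_leq_size zs_uniq zs_sub.
rewrite size_map size_iota -cardE [#|Fsub|](cardD1 0) Fsub0.
by rewrite -[(p ^ d)%N](prednK (ltnW q_gt1)).
Qed.

Lemma card_Fsub : #|Fsub| = (p ^ d)%N.
Proof. by apply/eqP; rewrite eqn_leq card_Fsub_le card_Fsub_ge. Qed.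

End FixedSubfield.

(* For a proper divisor d of n, p ^ n - 1 = (p ^ d - 1) M with Phi_n(p) | M:
   'X^n - 1 is the product of the Phi_e, e | n, those with e | d multiply to
   'X^d - 1, and Phi_n is among the others. *)
Lemma cyclotomic_cofactor (p n d : nat) : (0 < d)%N -> (d < n)%N -> (d %| n)%N ->
  exists M : int, p%:Z ^+ n - 1 = (p%:Z ^+ d - 1) * M /\ (('Phi_n).[p%:Z] %| M)%Z.
Proof.
move=> d_gt0 lt_dn d_dvd_n.
have n_gt0 : (0 < n)%N by apply: leq_trans lt_dn.
have fact_n := prod_Cyclotomic n_gt0.
rewrite (bigID (fun e => (e %| d)%N)) /= in fact_n.
have fact_d : \prod_(e <- divisors n | (e %| d)%N) 'Phi_e = 'X^d - 1.
  rewrite -big_filter -(prod_Cyclotomic d_gt0); apply: perm_big; apply: uniq_perm.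
  - by rewrite filter_uniq // divisors_uniq.
  - exact: divisors_uniq.
  - move=> e; rewrite mem_filter -!dvdn_divisors //.
    by apply/andP/idP => [[]//|e_dvd_d]; split => //; apply: dvdn_trans d_dvd_n.
have n_in : n \in [seq e <- divisors n | ~~ (e %| d)%N].
  rewrite mem_filter -dvdn_divisors // dvdnn andbT.
  by apply/negP => /(dvdn_leq d_gt0); rewrite leqNgt lt_dn.
rewrite fact_d -big_filter (bigD1_seq n n_in) ?filter_uniq ?divisors_uniq // in fact_n.
set R := \prod_(_ <- _ | _) _ in fact_n.
exists (('Phi_n).[p%:Z] * R.[p%:Z]); split; last exact: dvdz_mulr.
have := congr1 (fun P : {poly int} => P.[p%:Z]) fact_n.
by rewrite /= !hornerE => <-.
Qed.

Lemma log_congr_mod_cofactor (R : comNzRingType) (N k : nat) (M : int)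
    (g u : R) (a b : nat) :
  N.-primitive_root g -> (0 < k)%N -> N%:Z = k%:Z * M -> u ^+ k = 1 ->
  g ^+ a = u * g ^+ b -> (a%:Z = b%:Z %[mod M])%Z.
Proof.
move=> prim_g k_gt0 eN uk e_ab.
have : g ^+ (a * k) = g ^+ (b * k) by rewrite !exprM e_ab exprMn uk mul1r.
move/eqP; rewrite (eq_prim_root_expr prim_g) => /eqP emod.
have : (N%:Z %| (a * k)%:Z - (b * k)%:Z)%Z.
  by rewrite -eqz_mod_dvd; apply/eqP; rewrite !modz_nat emod.
rewrite eN !PoszM -mulrBl [k%:Z * M]mulrC dvdz_mul2r ?eqz_nat -?lt0n //.
by move=> M_dvd; apply/eqP; rewrite eqz_mod_dvd.
Qed.

Lemma ceil_div_bounds (d n1 n2 : nat) : (0 < n1)%N -> (0 < d)%N -> (d <= n1 * n2)%N ->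
  exists c : nat, Num.ceil (d%:Q / n1%:Q) = c%:Z /\
    [/\ (0 < c)%N, (c <= n2)%N & (n1 * c < d + n1)%N].
Proof.
move=> n1_gt0 d_gt0 le_d_n.
set x := d%:Q / n1%:Q.
have n1Q_gt0 : 0 < n1%:Q by rewrite ltr0n.
have ceil_gt0 : 0 < Num.ceil x by rewrite ceil_gt0 divr_gt0 ?ltr0n.
have ceil_le : Num.ceil x <= n2%:Z.
  by rewrite ceil_le_int /x ler_pdivrMr // -natrM ler_nat mulnC.
have ceil_lt : (Num.ceil x - 1) * n1%:Z < d%:Z.
  have := ceilB1_lt x; rewrite /x ltr_pdivlMr //.
  by rewrite -[n1%:Q]/((n1%:Z)%:~R) -intrM -[d%:Q]/((d%:Z)%:~R) ltr_int.
have abs_ceil : (`|Num.ceil x|%N)%:Z = Num.ceil x by rewrite gez0_abs // ltW.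
exists `|Num.ceil x|%N; split => //.
move: ceil_gt0 ceil_le ceil_lt; rewrite -abs_ceil mulrBl mul1r.
set c := `|_|%N; rewrite !absz_nat => ? ? ?; split; lia.
Qed.

Section Tower.
Variables (K : finFieldType) (psi : {poly K}) (mi : monic_irreducible_poly psi).

Lemma rho_small (P : {poly K}) : (size P < size psi)%N -> val (rho mi P) = P.
Proof. by move=> small_P; apply: in_qpoly_small; rewrite (mk_monicE mi). Qed.

Lemma small_multiple (S : {pred tower psi mi}) (T : tower psi mi) (m : nat) :
  {in S &, forall s t, s - t \in S} -> T != 0 -> (m < size psi)%N ->
  (#|tower psi mi| < #|S| * #|K| ^ m)%N ->
  exists u, exists P : {poly K},
    [/\ u \in S, u != 0, P != 0, (size P <= m)%N & rho mi P = u * T].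
Proof.
move=> S_subr T_neq0 m_small card_lt.
pose f (x : tower psi mi * {poly_m K}) := x.1 * T + rho mi (val x.2).
pose D := setX [set s in S] [set: {poly_m K}].
have [f_inj | ] := boolP (dinjectiveb f D).
  have := @leq_card_in _ _ f (mem D) (elimT (dinjectiveP f D) f_inj).
  by rewrite cardsX cardsE cardsT card_npoly leqNgt card_lt.
case/dinjectivePn => -[s1 v1] Dx [[s2 v2] /andP [neq_xy Dy] /= e].
rewrite !in_setX !inE !andbT /= in Dx Dy; rewrite /f /= in e.
have small (v : {poly_m K}) : (size (val v) < size psi)%N.
  exact: leq_ltn_trans (size_npoly v) m_small.
have ePu : rho mi (val v2 - val v1) = (s1 - s2) * T.
  have -> : rho mi (val v2 - val v1) = rho mi (val v2) - rho mi (val v1).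
    exact: raddfB.
  have -> : rho mi (val v2) = s1 * T + rho mi (val v1) - s2 * T.
    by rewrite e [s2 * T + _]addrC addrK.
  ring.
have s_neq : s1 - s2 != 0.
  apply: contra neq_xy; rewrite subr_eq0 => /eqP eq_s; rewrite eq_s in e *.
  suff -> : v1 = v2 by [].
  apply: val_inj; rewrite -(rho_small (small v1)) -(rho_small (small v2)).
  by congr val; apply: addrI e.
exists (s1 - s2), (val v2 - val v1); split => //.
- exact: S_subr.
- apply: contra s_neq => /eqP P0; move: ePu; rewrite P0 /rho raddf0 => /esym/eqP.
  by rewrite mulf_eq0 (negbTE T_neq0) orbF.
- apply: leq_trans (size_polyD _ _) _.
  by rewrite size_polyN geq_max !size_npoly.
Qed.

End Tower.

Unset Implicit Arguments.

Theorem mainTheorem1 (p n1 n2 d : nat) (K : finFieldType) (psi : {poly K})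
    (mi : monic_irreducible_poly psi) (T : tower psi mi) :
  prime p -> (0 < n1)%N -> (0 < n2)%N -> ~~ prime (n1 * n2) ->
  #|K| = (p ^ n1)%N ->
  size psi = n2.+1 ->
  (* d is the largest divisor of n = n1 n2 with 1 < d < n *)
  (d %| n1 * n2)%N -> (1 < d < n1 * n2)%N ->
  (forall e : nat, (e %| n1 * n2)%N -> (1 < e < n1 * n2)%N -> (e <= d)%N) ->
  (* T is nonzero and lies in no proper subfield *)
  T != 0 ->
  (forall S : {pred tower psi mi}, GRing.divring_closed S -> T \in S ->
     forall z : tower psi mi, z \in S) ->
  (* the representative polynomial of T has degree > n2 - d/n1 *)
  (n2%:Q - d%:Q / n1%:Q < ((size (val T)).-1)%:Q) ->
  exists u : tower psi mi, exists P : {poly K},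
    [/\ u != 0 /\
        (exists2 S : {pred tower psi mi}, GRing.divring_closed S &
          (#|S| = (p ^ d)%N /\ u \in S)),
        P != 0 /\ ((size P).-1)%:Z <= n2%:Z - (Num.ceil (d%:Q / n1%:Q)),
        rho mi P = u * T &
        (forall g : tower psi mi, (#|tower psi mi|.-1).-primitive_root g ->
          forall a b : nat, g ^+ a = rho mi P -> g ^+ b = T ->
          (a%:Z = b%:Z %[mod ('Phi_(n1 * n2)).[p%:Z]])%Z)].
Proof.
move=> p_prime n1_gt0 n2_gt0 _ cardK size_psi d_dvd /andP[d_gt1 lt_d_n] _ T_neq0 _ _.
have cardF : #|tower psi mi| = (p ^ (n1 * n2))%N.
  by rewrite card_qfpoly size_psi cardK -expnM.
have d_gt0 : (0 < d)%N := ltnW d_gt1.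
have [c [-> [c_gt0 c_le_n2 c_lt]]] := ceil_div_bounds n1_gt0 d_gt0 (ltnW lt_d_n).
pose S : {pred tower psi mi} := Fsub p d.
have S_closed : GRing.divring_closed S := Fsub_closed d p_prime cardF.
have card_S : #|S| = (p ^ d)%N := card_Fsub p_prime cardF d_gt0 d_dvd.
have card_lt : (#|tower psi mi| < #|S| * #|K| ^ (n2 - c).+1)%N.
  rewrite cardF card_S cardK -expnM -expnD ltn_exp2l ?prime_gt1 //.
  by have := leq_mul (leqnn n1) c_le_n2; rewrite mulnS mulnBr; lia.
have S_subr : {in S &, forall s t, s - t \in S} by case: S_closed.
have m_small : ((n2 - c).+1 < size psi)%N by rewrite size_psi; lia.
have [u [P [uS u_neq0 P_neq0 size_P ePu]]] :=
  small_multiple S_subr T_neq0 m_small card_lt.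
exists u, P; split => //.
- by split => //; exists S.
- by split => //; rewrite subzn // lez_nat; lia.
move=> g prim_g a b ga gb.
have [M [eM Phi_dvd]] := cyclotomic_cofactor p d_gt0 lt_d_n d_dvd.
have q_gt1 : (1 < p ^ d)%N by rewrite -(expn0 p) ltn_exp2l ?prime_gt1.
have k_gt0 : (0 < (p ^ d)%N.-1)%N by lia.
have eN : (#|tower psi mi|.-1)%:Z = ((p ^ d)%N.-1)%:Z * M.
  by rewrite cardF !predn_int ?expn_gt0 ?prime_gt0 // -!natz !natrX natz eM.
apply/eqP; rewrite eqz_mod_dvd; apply: dvdz_trans Phi_dvd _; rewrite -eqz_mod_dvd.
have u_root : u ^+ (p ^ d)%N.-1 = 1 := Fsub_unity_root p_prime uS u_neq0.
apply/eqP; apply: (log_congr_mod_cofactor prim_g k_gt0 eN u_root).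
by rewrite ga ePu gb.
Qed.
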